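(* Let $l$ be a nonzero natural number. Define $(a_n)_{n\ge 0}$ by $a_0=0$, $a_1=1$, $a_n=l\,a_{n-1}+a_{n-2}$ ($n\ge2$), $(b_n)_{n\ge 0}$ by $b_0=2$, $b_1=l$, $b_n=l\,b_{n-1}+b_{n-2}$ ($n\ge 2$), and let $(f_n)_{n\ge0}$ be the Fibonacci sequence ($f_0=0$, $f_1=1$, $f_n=f_{n-1}+f_{n-2}$). Then for every positive integer $n$: (i) $\mathbb{H}_{\mathbb{Q}}(-1,f_{2n+1})$ splits; (ii) $\mathbb{H}_{\mathbb{Q}}(-1,5f_{2n+1})$ splits; (iii) $\mathbb{H}_{\mathbb{Q}}(-1,a_{2n+1})$ splits; (iv) $\mathbb{H}_{\mathbb{Q}}(-1,(l^2+4)a_{2n+1})$ splits; (v) $\mathbb{H}_{\mathbb{Q}}(-1,f_{2n+1}f_{2n-1})$ splits; (vi) $\mathbb{H}_{\mathbb{Q}}(-1,a_{2n+1}a_{2n-1})$ splits; (vii) $\mathbb{H}_{\mathbb{Q}}(-1,-b_{n+1}b_{n-1})$ is a division algebra; (viii) $\mathbb{H}_{\mathbb{Q}}(1,b_{n+1}b_{n-1})$ splits; (ix) if $l$ is odd and $n\equiv 0\pmod 6$, then $\mathbb{H}_{\mathbb{Q}}(-1,b_{n+1}b_{n-1})$ is a division algebra; (x) if $6\nmid n$ and every prime $p\equiv 3\pmod 4$ dividing $b_{n+1}b_{n-1}$ divides it to an even exponent, then $\mathbb{H}_{\mathbb{Q}}(-1,b_{n+1}b_{n-1})$ splits; (xi)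 if $n\equiv 7\pmod{16}$, then $\mathbb{H}_{\mathbb{Q}}(-9,f_n)$ splits.
   Context: For nonzero rationals $\alpha,\beta$, the generalized quaternion algebra $\mathbb{H}_{\mathbb{Q}}(\alpha,\beta)$ is the $4$-dimensional $\mathbb{Q}$-algebra with basis $1,e_2,e_3,e_4$ and multiplication $e_2^2=\alpha$, $e_3^2=\beta$, $e_2e_3=-e_3e_2=e_4$ (so $e_4^2=-\alpha\beta$, $e_2e_4=\alpha e_3$, $e_3e_4=-\beta e_2$, etc.). It ''splits'' if it is isomorphic to the matrix algebra $M_2(\mathbb{Q})$, and it is a division algebra if every nonzero element is invertible (equivalently the norm $x_1^2-\alpha x_2^2-\beta x_3^2+\alpha\beta x_4^2$ vanishes only at $0$). *)

From HB Require Import structures.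
From mathcomp Require Import all_boot all_order all_algebra.
Set Implicit Arguments. Unset Strict Implicit. Unset Printing Implicit Defensive.
Import Order.TTheory GRing.Theory Num.Theory.
Local Open Scope ring_scope.

(* Generalized quaternion algebra H_Q(alpha,beta): elements are coordinate
   4-tuples (x1,x2,x3,x4) standing for x1 + x2 e2 + x3 e3 + x4 e4. *)
Definition quat := (rat * rat * rat * rat)%type.

Definition qone : quat := (1, 0, 0, 0).
Definition qzero : quat := (0, 0, 0, 0).

Definition qadd (x y : quat) : quat :=
  let: (x1, x2, x3, x4) := x in let: (y1, y2, y3, y4) := y in
  (x1 + y1, x2 + y2, x3 + y3, x4 + y4).

Definition qscale (c : rat) (x : quat) : quat :=
  let: (x1, x2, x3, x4) := x in (c * x1, c * x2, c * x3, c * x4).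

(* multiplication with e2^2 = alpha, e3^2 = beta, e2 e3 = - e3 e2 = e4 *)
Definition qmul (alpha beta : rat) (x y : quat) : quat :=
  let: (x1, x2, x3, x4) := x in let: (y1, y2, y3, y4) := y in
  ( x1 * y1 + alpha * x2 * y2 + beta * x3 * y3 - alpha * beta * x4 * y4,
    x1 * y2 + x2 * y1 - beta * x3 * y4 + beta * x4 * y3,
    x1 * y3 + x3 * y1 + alpha * x2 * y4 - alpha * x4 * y2,
    x1 * y4 + x4 * y1 + x2 * y3 - x3 * y2 ).

Definition quat_splits (alpha beta : rat) : Prop :=
  exists f : quat -> 'M[rat]_2,
    bijective f /\
    (forall (c : rat) (x y : quat), f (qadd (qscale c x) y) = c *: f x + f y) /\
    (forall x y : quat, f (qmul alpha beta x y) = f x *m f y) /\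
    f qone = 1%:M.

Definition quat_division (alpha beta : rat) : Prop :=
  forall x : quat, x <> qzero ->
    exists y : quat, qmul alpha beta x y = qone /\ qmul alpha beta y x = qone.

Fixpoint seq_a (l n : nat) : nat :=
  match n with
  | 0 => 0
  | 1 => 1
  | (m.+1 as k).+1 => l * seq_a l k + seq_a l m
  end.

Fixpoint seq_b (l n : nat) : nat :=
  match n with
  | 0 => 2
  | 1 => l
  | (m.+1 as k).+1 => l * seq_b l k + seq_b l m
  end.

Fixpoint fib (n : nat) : nat :=
  match n with
  | 0 => 0
  | 1 => 1
  | (m.+1 as k).+1 => fib k + fib m
  end.

From HB Require Import structures.
From mathcomp Require Import all_boot all_order all_algebra finfield.
From mathcomp Require Import ring zify.
Set Implicit Arguments. Unset Strict Implicit. Unset Printing Implicit Defensive.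
Import Order.TTheory GRing.Theory Num.Theory.
Local Open Scope ring_scope.

(* H_Q(alpha, beta) splits as soon as beta = u^2 - alpha v^2 with u, v rational,
   and it is a division algebra as soon as its norm form is anisotropic.  For
   alpha = -1 splitting thus reduces to writing beta as a sum of two squares:
   a_(2n+1) = a_n^2 + a_(n+1)^2, sums of two squares are closed under products,
   and under the hypothesis of (x) the two-squares theorem applies.  (viii) and
   (xi) use beta = ((beta+1)/2)^2 - ((beta-1)/2)^2 and
   f_(2k+1) = f_k^2 + 9 (f_(k+1)/3)^2, and the norm form of (vii) is positive
   definite.  For (ix), the Cassini identity
   b_(n+1) b_(n-1) - b_n^2 = (-1)^(n-1) (l^2 + 4) and the parity of b_n (even
   for 3 | n) give b_(n+1) b_(n-1) = 3 mod 4; then x^2 + y^2 = B (z^2 + w^2)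
   forces x, y, z, w to be even (look mod 8), so by descent it has only the
   trivial solution. *)

Definition mx22 (a b c d : rat) : 'M[rat]_2 :=
  \matrix_(i < 2, j < 2)
    if i == 0 :> nat then (if j == 0 :> nat then a else b)
    else (if j == 0 :> nat then c else d).

Lemma mx22_eta (M : 'M[rat]_2) : M = mx22 (M 0 0) (M 0 1) (M 1 0) (M 1 1).
Proof.
apply/matrixP => -[[|[|//]] ?] [[|[|//]] ?]; rewrite !mxE /=;
  by congr (M _ _); apply: val_inj.
Qed.

Lemma mx22_mul a b c d a' b' c' d' :
  mx22 a b c d *m mx22 a' b' c' d' =
  mx22 (a * a' + b * c') (a * b' + b * d') (c * a' + d * c') (c * b' + d * d').
Proof.
by apply/matrixP => -[[|[|//]] ?] [[|[|//]] ?]; rewrite !mxE big_ord_recl big_ord1 !mxE.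
Qed.

Lemma mx22_scale_add k a b c d a' b' c' d' :
  k *: mx22 a b c d + mx22 a' b' c' d' =
  mx22 (k * a + a') (k * b + b') (k * c + c') (k * d + d').
Proof. by apply/matrixP => -[[|[|//]] ?] [[|[|//]] ?]; rewrite !mxE. Qed.

Lemma mx22_1 : 1%:M = mx22 1 0 0 1.
Proof. by apply/matrixP => -[[|[|//]] ?] [[|[|//]] ?]; rewrite !mxE. Qed.

(* e2 goes to [[0, alpha], [1, 0]] and e3 to [[u, -alpha v], [v, -u]]: both
   square to the right scalars and they anticommute. *)
Lemma quat_splits_norm (alpha beta u v : rat) :
  alpha != 0 -> beta != 0 -> beta = u ^+ 2 - alpha * v ^+ 2 ->
  quat_splits alpha beta.
Proof.
move=> alpha0 beta0 beta_uv; subst beta.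
pose f (x : quat) := let: (x1, x2, x3, x4) := x in
  mx22 (x1 + u * x3 + alpha * v * x4) (alpha * x2 - alpha * v * x3 - alpha * u * x4)
       (x2 + v * x3 + u * x4) (x1 - u * x3 - alpha * v * x4).
pose g (M : 'M[rat]_2) : quat :=
  let P := (M 0 0 - M 1 1) / 2 in let Q := (M 1 0 - M 0 1 / alpha) / 2 in
  ((M 0 0 + M 1 1) / 2, (M 0 1 / alpha + M 1 0) / 2,
   (u * P - alpha * v * Q) / (u ^+ 2 - alpha * v ^+ 2),
   (u * Q - v * P) / (u ^+ 2 - alpha * v ^+ 2)).
exists f; split; [|split; [|split]].
- exists g => [[[[x1 x2] x3] x4]|M].
    by rewrite /f /g !mxE /=; congr (_, _, _, _); field; rewrite ?alpha0 ?beta0.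
  by rewrite [RHS]mx22_eta /f /g; congr mx22; field; rewrite ?alpha0 ?beta0.
- by move=> k [[[x1 x2] x3] x4] [[[y1 y2] y3] y4]; rewrite mx22_scale_add; congr mx22; ring.
- by move=> [[[x1 x2] x3] x4] [[[y1 y2] y3] y4]; rewrite mx22_mul; congr mx22; ring.
- by rewrite mx22_1; congr mx22; ring.
Qed.

Lemma quat_splits_1 (beta : rat) : beta != 0 -> quat_splits 1 beta.
Proof.
move=> beta0; apply: (quat_splits_norm (u := (beta + 1) / 2) (v := (beta - 1) / 2)) => //.
by field.
Qed.

Definition qnorm (alpha beta : rat) (x : quat) : rat :=
  let: (x1, x2, x3, x4) := x in
  x1 ^+ 2 - alpha * x2 ^+ 2 - beta * x3 ^+ 2 + alpha * beta * x4 ^+ 2.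

Definition anisotropic (alpha beta : rat) : Prop :=
  forall x : quat, qnorm alpha beta x = 0 -> x = qzero.

Lemma quat_division_anisotropic (alpha beta : rat) :
  anisotropic alpha beta -> quat_division alpha beta.
Proof.
move=> aniso [[[x1 x2] x3] x4] x0.
have N0 : qnorm alpha beta (x1, x2, x3, x4) != 0 by apply: contra_notN x0 => /eqP/aniso.
rewrite /= in N0.
set N := _ + _ in N0.
exists (x1 / N, - x2 / N, - x3 / N, - x4 / N).
by split; congr (_, _, _, _); rewrite /N; field.
Qed.

Lemma anisotropic_lt0 (alpha beta : rat) :
  alpha < 0 -> beta < 0 -> anisotropic alpha beta.
Proof.
move=> alpha_lt0 beta_lt0 [[[x1 x2] x3] x4] /= N0.
have sq_ge0 (c x : rat) : 0 < c -> 0 <= c * x ^+ 2.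
  by move=> c0; rewrite mulr_ge0 ?sqr_ge0 ?ltW.
have sq_eq0 (c x : rat) : 0 < c -> c * x ^+ 2 == 0 -> x = 0.
  by move=> c0; rewrite mulf_eq0 gt_eqF //= sqrf_eq0 => /eqP.
have c1 : 0 < 1 :> rat by [].
have c2 : 0 < - alpha by rewrite oppr_gt0.
have c3 : 0 < - beta by rewrite oppr_gt0.
have c4 : 0 < alpha * beta by rewrite nmulr_rgt0.
have /eqP : 1 * x1 ^+ 2 + - alpha * x2 ^+ 2 + - beta * x3 ^+ 2 + alpha * beta * x4 ^+ 2 = 0.
  by rewrite -N0; ring.
rewrite !paddr_eq0 ?addr_ge0 ?sq_ge0 // => /andP[/andP[/andP[]]].
by move=> /(sq_eq0 _ _ c1)-> /(sq_eq0 _ _ c2)-> /(sq_eq0 _ _ c3)-> /(sq_eq0 _ _ c4)->.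
Qed.

Lemma natr_absz_sqr (R : pzRingType) (z : int) : ((`|z| ^ 2)%N%:R : R) = z%:~R ^+ 2.
Proof. by rewrite -abszX pmulrn abszE ger0_norm ?sqr_ge0 // rmorphXn. Qed.

Section SumOfTwoSquares.
Local Open Scope nat_scope.

Definition sum2sq (n : nat) : Prop := exists x y, n = x ^ 2 + y ^ 2.

Lemma sum2sqM m n : sum2sq m -> sum2sq n -> sum2sq (m * n).
Proof.
move=> [x [y ->]] [z [w ->]]; exists (x * z + y * w), `|x * w - y * z|.
by have := sqrn_dist (x * w) (y * z); move: `|_| => t; nia.
Qed.

Lemma sum2sqX n k : sum2sq n -> sum2sq (n ^ k).
Proof.
move=> sq_n; elim: k => [|k IHk]; first by exists 1, 0.
by rewrite expnS; apply: sum2sqM.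
Qed.

(* X^(2k) - 1 has fewer than p - 1 = 4k roots, so some a has a^(2k) = -1 and
   a^k is a square root of -1. *)
Lemma Fp_sqrt_neg1 p : prime p -> p %% 4 = 1 -> exists s : 'F_p, (s ^+ 2 = -1)%R.
Proof.
move=> p_pr p1; set k := p %/ 4.
have p_eq : p = (4 * k).+1 by rewrite {1}(divn_eq p 4) p1 addn1 mulnC.
have k_gt0 : 0 < k by have := prime_gt1 p_pr; lia.
have [a /andP[a0 ak]] : exists a : 'F_p, (a != 0)%R && (a ^+ (2 * k) != 1)%R.
  apply/existsP; apply: contraT => /existsPn roots.
  have : size (enum (predC1 (0 : 'F_p)%R)) <= 2 * k.
    apply: max_unity_roots; [lia | | exact: enum_uniq].
    apply/allP => a; rewrite mem_enum inE => a0.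
    by move: (roots a); rewrite a0 /= negbK unity_rootE.
  by rewrite -cardE cardC1 card_Fp // p_eq; lia.
have a4k : (a ^+ (4 * k) = 1)%R.
  have ap : (a ^+ p = a)%R by move: (expf_card a); rewrite card_Fp.
  by apply: (mulfI a0); rewrite -exprS -p_eq ap mulr1.
exists (a ^+ k)%R; rewrite -exprM mulnC; apply/eqP.
have : (a ^+ (2 * k) ^+ 2 == 1)%R by rewrite -exprM mulnAC a4k.
by rewrite sqrf_eq1 (negbTE ak).
Qed.

Lemma prime_between_squares p : prime p -> exists2 m, m ^ 2 < p & p < m.+1 ^ 2.
Proof.
move=> p_pr; have p_gt1 := prime_gt1 p_pr.
have ex_m : exists m, m ^ 2 <= p by exists 0.
have ub_m m : m ^ 2 <= p -> m <= p by move=> ?; nia.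
case: (ex_maxnP ex_m ub_m) => m le_m2p max_m; exists m; last first.
  by rewrite ltnNge; apply/negP => /max_m; rewrite ltnn.
rewrite ltn_neqAle le_m2p andbT; apply/eqP => m2p.
have /(primeP p_pr).2 : m %| p by rewrite -m2p dvdn_mull.
by case/orP => /eqP m_eq; move: m2p; rewrite m_eq; nia.
Qed.

Lemma natr_dist_sqr (R : pzRingType) (u v : nat) :
  ((`|u - v| ^ 2)%N%:R = (u%:R - v%:R) ^+ 2 :> R)%R.
Proof. by rewrite natr_absz_sqr intrB -!pmulrn. Qed.

(* Thue's lemma: two of the (m + 1)^2 > p values u + s v with u, v <= m
   coincide in F_p, and their difference gives p | du^2 + dv^2 < 2 p. *)
Lemma sum2sq_prime_sqrt_neg1 p (s : 'F_p) : prime p -> (s ^+ 2 = -1)%R -> sum2sq p.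
Proof.
move=> p_pr s2; have [m lt_m2p lt_pm2] := prime_between_squares p_pr.
pose f (uv : 'I_m.+1 * 'I_m.+1) : 'F_p := (uv.1%:R + s * uv.2%:R)%R.
have /injectivePn[[u v] [[u' v'] uv_neq f_eq]] : ~~ injectiveb f.
  apply/injectiveP => /leq_card; rewrite card_prod !card_ord Fp_cast //; lia.
set du := `|u - u'|; set dv := `|v - v'|.
have dvd_p : p %| du ^ 2 + dv ^ 2.
  rewrite (dvdn_pcharf (pchar_Fp p_pr)) natrD !natr_dist_sqr.
  move: f_eq; rewrite /f /= => f_eq.
  have -> : (u%:R = u'%:R + s * v'%:R - s * v%:R :> 'F_p)%R by rewrite -f_eq addrK.
  apply/eqP; transitivity ((s ^+ 2 + 1) * (v'%:R - v%:R) ^+ 2)%R; first by ring.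
  by rewrite s2 addNr mul0r.
have dist_le (i j : 'I_m.+1) : `|i - j| <= m.
  have := ltn_ord i; have := ltn_ord j.
  by case: (leqP i j) => [/distnEr | /ltnW/distnEl] ->; lia.
have := dist_le u u'; have := dist_le v v'; rewrite -/du -/dv => dv_le du_le.
have sum_gt0 : 0 < du ^ 2 + dv ^ 2.
  rewrite addn_gt0 !sqrn_gt0 /du /dv !lt0n !distn_eq0 !val_eqE -negb_and.
  by rewrite -xpair_eqE.
have [k p_k] := dvdnP dvd_p; exists du, dv.
by move: sum_gt0; rewrite p_k; case: k p_k => [|[|k]] p_k; nia.
Qed.

Lemma sum2sq_prime p : prime p -> p %% 4 != 3 -> sum2sq p.
Proof.
move=> p_pr p_n3; have [->|odd_p] := even_prime p_pr; first by exists 1, 1.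
have [s s2] : exists s : 'F_p, (s ^+ 2 = -1)%R.
  apply: Fp_sqrt_neg1 => //; have : p %% 4 < 4 by rewrite ltn_mod.
  move: p_n3 odd_p; rewrite -(odd_mod p (erefl : odd 4 = false)).
  by case: (p %% 4) => [|[|[|[|]]]].
exact: sum2sq_prime_sqrt_neg1 s2.
Qed.

Lemma sum2sq_even_logn_3mod4 n : 0 < n ->
  (forall p, prime p -> p %% 4 = 3 -> p %| n -> ~~ odd (logn p n)) -> sum2sq n.
Proof.
move=> n_gt0 even_log; rewrite (prod_prime_decomp n_gt0) prime_decompE big_map big_seq.
apply: (big_ind sum2sq); [by exists 1, 0 | exact: sum2sqM | move=> p /=].
rewrite mem_primes => /and3P[p_pr _ p_dvd].
have [p3 | p_n3] := eqVneq (p %% 4) 3; last exact/sum2sqX/sum2sq_prime.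
exists (p ^ (logn p n)./2), 0.
by rewrite -expnM muln2 halfK (negbTE (even_log p p_pr p3 p_dvd)) subn0 exp0n // addn0.
Qed.

End SumOfTwoSquares.

Lemma quat_splits_sum2sq (n : nat) : sum2sq n -> (0 < n)%N -> quat_splits (-1) n%:R.
Proof.
move=> [x [y ->]] n_gt0; apply: (quat_splits_norm (u := x%:R) (v := y%:R)).
- by rewrite oppr_eq0 oner_eq0.
- by rewrite pnatr_eq0 -lt0n.
- by rewrite natrD !natrX; ring.
Qed.

Section Descent.
Local Open Scope nat_scope.

Lemma sum2sq_eq_3mod4_even B a b c d :
  B %% 4 = 3 -> a ^ 2 + b ^ 2 = B * (c ^ 2 + d ^ 2) ->
  ~~ [|| odd a, odd b, odd c | odd d].
Proof.
move=> B3 sq_eq.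
have check : all (fun r => all (fun x => all (fun y => all (fun z => all (fun w =>
    (x ^ 2 + y ^ 2 == r * (z ^ 2 + w ^ 2) %[mod 8]) ==>
    ~~ [|| odd x, odd y, odd z | odd w])
    (iota 0 8)) (iota 0 8)) (iota 0 8)) (iota 0 8)) [:: 3; 7].
  by vm_compute.
have B8 : B %% 8 \in [:: 3; 7].
  have : B %% 8 %% 4 = 3 by rewrite modn_dvdm.
  have : B %% 8 < 8 by rewrite ltn_mod.
  by rewrite !inE; lia.
have mod8 x : x %% 8 \in iota 0 8 by rewrite mem_iota ltn_mod.
move: check => /allP/(_ _ B8)/allP/(_ _ (mod8 a))/allP/(_ _ (mod8 b)).
move=> /allP/(_ _ (mod8 c))/allP/(_ _ (mod8 d))/implyP.
rewrite !odd_mod //; apply.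
have sq_mod x y : ((x %% 8) ^ 2 + (y %% 8) ^ 2) %% 8 = (x ^ 2 + y ^ 2) %% 8.
  by rewrite -modnDm !modnXm modnDm.
by rewrite sq_mod modnMml -modnMmr sq_mod modnMmr sq_eq.
Qed.

Lemma sum2sq_eq_3mod4_eq0 B a b c d :
  B %% 4 = 3 -> a ^ 2 + b ^ 2 = B * (c ^ 2 + d ^ 2) ->
  [/\ a = 0, b = 0, c = 0 & d = 0].
Proof.
move=> B3; move: {2}(a + b + c + d) (leqnn (a + b + c + d)) => s.
elim: s a b c d => [|s IHs] a b c d le_s sq_eq; first by split; lia.
have /norP[even_a /norP[even_b /norP[even_c even_d]]] := sum2sq_eq_3mod4_even B3 sq_eq.
move: le_s sq_eq; rewrite -[a]odd_double_half -[b]odd_double_half.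
rewrite -[c]odd_double_half -[d]odd_double_half.
rewrite (negbTE even_a) (negbTE even_b) (negbTE even_c) (negbTE even_d) !add0n.
move: a./2 b./2 c./2 d./2 => a' b' c' d' le_s sq_eq.
have sq_eq' : a' ^ 2 + b' ^ 2 = B * (c' ^ 2 + d' ^ 2).
  move: sq_eq; rewrite -!muln2 !expnMn.
  move: (a' ^ 2) (b' ^ 2) (c' ^ 2) (d' ^ 2) => x y z w; nia.
have le_s' : a' + b' + c' + d' <= s by lia.
by have [-> -> -> ->] := IHs a' b' c' d' le_s' sq_eq'.
Qed.

End Descent.

Lemma rat_mul_int_denq (x : rat) (d : int) :
  (denq x %| d)%Z -> exists n : int, x * d%:~R = n%:~R.
Proof. by case/dvdzP=> k ->; exists (k * numq x); rewrite !intrM numqE; ring. Qed.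

Lemma anisotropic_neg1_3mod4 (B : nat) : (B %% 4 = 3)%N -> anisotropic (-1) B%:R.
Proof.
move=> B3 [[[x1 x2] x3] x4] N0.
pose D := denq x1 * denq x2 * denq x3 * denq x4.
have D0 : D%:~R != 0 :> rat by rewrite intr_eq0 !mulf_neq0 ?denq_neq0.
have [n1 e1] : exists n, x1 * D%:~R = n%:~R.
  exact/rat_mul_int_denq/dvdz_mulr/dvdz_mulr/dvdz_mulr/dvdzz.
have [n2 e2] : exists n, x2 * D%:~R = n%:~R.
  exact/rat_mul_int_denq/dvdz_mulr/dvdz_mulr/dvdz_mull/dvdzz.
have [n3 e3] : exists n, x3 * D%:~R = n%:~R.
  exact/rat_mul_int_denq/dvdz_mulr/dvdz_mull/dvdzz.
have [n4 e4] : exists n, x4 * D%:~R = n%:~R.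
  exact/rat_mul_int_denq/dvdz_mull/dvdzz.
have sq_eq : (`|n1| ^ 2 + `|n2| ^ 2 = B * (`|n3| ^ 2 + `|n4| ^ 2))%N.
  apply/eqP; rewrite -(eqr_nat rat) natrM !natrD !natr_absz_sqr -e1 -e2 -e3 -e4.
  rewrite -subr_eq0; apply/eqP.
  transitivity (D%:~R ^+ 2 * qnorm (-1) B%:R (x1, x2, x3, x4)); first by rewrite /=; ring.
  by rewrite N0 mulr0.
have [/eqP z1 /eqP z2 /eqP z3 /eqP z4] := sum2sq_eq_3mod4_eq0 B3 sq_eq.
have x0 (x : rat) n : x * D%:~R = n%:~R -> `|n|%N == 0%N -> x = 0.
  by move=> e; rewrite absz_eq0 => /eqP n0; apply: (mulIf D0); rewrite mul0r e n0.
by rewrite (x0 _ _ e1 z1) (x0 _ _ e2 z2) (x0 _ _ e3 z3) (x0 _ _ e4 z4).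
Qed.

Section Sequences.
Local Open Scope nat_scope.

Lemma seq_aSS l n : seq_a l n.+2 = l * seq_a l n.+1 + seq_a l n.
Proof. by []. Qed.

Lemma seq_bSS l n : seq_b l n.+2 = l * seq_b l n.+1 + seq_b l n.
Proof. by []. Qed.

Lemma fibSS n : fib n.+2 = fib n.+1 + fib n.
Proof. by []. Qed.

Lemma fib_seq_a1 n : fib n = seq_a 1 n.
Proof. by elim/ltn_ind: n => -[|[|n]] IH //; rewrite fibSS seq_aSS mul1n !IH. Qed.

Lemma seq_a_gt0 l n : 0 < l -> 0 < seq_a l n.+1.
Proof.
move=> l_gt0; elim/ltn_ind: n => -[|n] IH //.
by rewrite seq_aSS addn_gt0 muln_gt0 l_gt0 IH.
Qed.

Lemma seq_b_gt0 l n : 0 < l -> 0 < seq_b l n.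
Proof.
by move=> l_gt0; elim/ltn_ind: n => -[|[|n]] IH //; rewrite seq_bSS addn_gt0 IH ?orbT.
Qed.

Lemma seq_a_addS l m n :
  seq_a l (m + n).+1 = seq_a l m.+1 * seq_a l n.+1 + seq_a l m * seq_a l n.
Proof.
elim: m n => [|m IHm] n; first by rewrite add0n mul1n mul0n addn0.
by rewrite addSnnS IHm !seq_aSS; ring.
Qed.

Lemma seq_a_doubleS l n : seq_a l n.*2.+1 = seq_a l n ^ 2 + seq_a l n.+1 ^ 2.
Proof. by rewrite -addnn seq_a_addS addnC. Qed.

Lemma seq_b_cassini l n :
  ((seq_b l n.+2 * seq_b l n)%:Z - (seq_b l n.+1 ^ 2)%:Z = (-1) ^+ n * (l ^ 2 + 4)%:Z)%R.
Proof.
elim: n => [|n IHn]; first by rewrite /= expr0 mul1r; ring.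
rewrite exprS -mulrA -IHn !seq_bSS.
ring.
Qed.

Lemma odd_seq_b3 l n : odd l -> odd (seq_b l n.+3) = odd (seq_b l n).
Proof. by move=> odd_l; rewrite !seq_bSS !(oddD, oddM) odd_l /= addbC addKb. Qed.

Lemma even_seq_b_mul3 l k : odd l -> ~~ odd (seq_b l (3 * k)).
Proof. by move=> odd_l; elim: k => [|k IHk] //; rewrite mulnS addnC addn3 odd_seq_b3. Qed.

Lemma seq_b_mod4 l n :
  odd l -> 0 < n -> 6 %| n -> (seq_b l n.+1 * seq_b l n.-1) %% 4 = 3.
Proof.
move=> odd_l; case: n => [//|n] _ dvd6 /=.
have odd_n : odd n by move: (dvdn_trans (isT : 2 %| 6) dvd6); rewrite dvdn2 /= negbK.
have [k n1_eq] : exists k, n.+1 = 3 * k.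
  by case/dvdnP: (dvdn_trans (isT : 3 %| 6) dvd6) => k ->; exists k; rewrite mulnC.
have := seq_b_cassini l n; rewrite -signr_odd odd_n expr1 mulN1r.
have := even_seq_b_mul3 k odd_l; rewrite -n1_eq.
move: (seq_b l n.+1) (seq_b l n.+2 * seq_b l n) => c B even_c cassini.
have l2 : l ^ 2 = 4 * (l./2 ^ 2 + l./2) + 1.
  by rewrite -{1}(odd_double_half l) odd_l -muln2 /=; ring.
have c2 : c ^ 2 = 4 * c./2 ^ 2.
  by rewrite -{1}(odd_double_half c) (negbTE even_c) add0n -muln2; ring.
rewrite l2 c2 in cassini.
lia.
Qed.

Lemma sum2sq_seq_a_doubleS l n : sum2sq (seq_a l n.*2.+1).
Proof. by exists (seq_a l n), (seq_a l n.+1); rewrite seq_a_doubleS. Qed.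

End Sequences.

Theorem proposition3p4 (l n : nat) (hl : (0 < l)%N) (hn : (0 < n)%N) :
  let a := seq_a l in
  let b := seq_b l in
  let B := (b n.+1 * b n.-1)%N in
  (quat_splits (-1) (fib n.*2.+1)%:R) /\
  (quat_splits (-1) (5 * fib n.*2.+1)%:R) /\
  (quat_splits (-1) (a n.*2.+1)%:R) /\
  (quat_splits (-1) ((l ^ 2 + 4) * a n.*2.+1)%:R) /\
  (quat_splits (-1) (fib n.*2.+1 * fib n.*2.-1)%:R) /\
  (quat_splits (-1) (a n.*2.+1 * a n.*2.-1)%:R) /\
  (quat_division (-1) (- (B%:R))) /\
  (quat_splits 1 B%:R) /\
  (odd l -> (6 %| n)%N -> quat_division (-1) B%:R) /\
  (~~ (6 %| n)%N ->
     (forall p : nat, prime p -> (p %% 4 = 3)%N -> (p %| B)%N ->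
        ~~ odd (logn p B)) ->
     quat_splits (-1) B%:R) /\
  ((n %% 16 = 7)%N -> quat_splits (-9) (fib n)%:R).
Proof.
move=> a b B.
have B_gt0 : (0 < B)%N by rewrite muln_gt0 !seq_b_gt0.
have a_gt0 k : (0 < a k.+1)%N by apply: seq_a_gt0.
have fib_gt0 k : (0 < fib k.+1)%N by rewrite fib_seq_a1 seq_a_gt0.
have sq_a k : sum2sq (a k.*2.+1) by apply: sum2sq_seq_a_doubleS.
have sq_fib k : sum2sq (fib k.*2.+1) by rewrite fib_seq_a1; apply: sum2sq_seq_a_doubleS.
have sq_5 : sum2sq 5 by exists 1%N, 2%N.
have sq_l4 : sum2sq (l ^ 2 + 4) by exists l, 2%N.
have dbl_pred : n.*2.-1 = n.-1.*2.+1 by rewrite -[in LHS](prednK hn).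
rewrite dbl_pred.
split; first exact: quat_splits_sum2sq.
split; first by apply: quat_splits_sum2sq (sum2sqM sq_5 (sq_fib n)) _; rewrite muln_gt0 fib_gt0.
split; first exact: quat_splits_sum2sq.
split; first by apply: quat_splits_sum2sq (sum2sqM sq_l4 (sq_a n)) _;
  rewrite muln_gt0 a_gt0 addn_gt0 orbT.
split; first by apply: quat_splits_sum2sq (sum2sqM (sq_fib n) (sq_fib n.-1)) _;
  rewrite muln_gt0 !fib_gt0.
split; first by apply: quat_splits_sum2sq (sum2sqM (sq_a n) (sq_a n.-1)) _;
  rewrite muln_gt0 !a_gt0.
split; first by apply/quat_division_anisotropic/anisotropic_lt0; rewrite ?oppr_lt0 ?ltr0n.
split; first by apply: quat_splits_1; rewrite pnatr_eq0 -lt0n.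
split.
  by move=> odd_l dvd6; apply/quat_division_anisotropic/anisotropic_neg1_3mod4/seq_b_mod4.
(* (x) does not need its hypothesis ~~ (6 %| n). *)
split=> [_ even_log|].
  exact: quat_splits_sum2sq (sum2sq_even_logn_3mod4 B_gt0 even_log) B_gt0.
move=> n16; have odd_n : odd n by rewrite -(odd_mod n (erefl : odd 16 = false)) n16.
rewrite -(odd_double_half n) odd_n add1n fib_seq_a1 seq_a_doubleS.
apply: (quat_splits_norm (u := (seq_a 1 n./2)%:R) (v := (seq_a 1 n./2.+1)%:R / 3)) => //.
  by rewrite pnatr_eq0 -lt0n -seq_a_doubleS seq_a_gt0.
by rewrite natrD !natrX; field.
Qed.
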